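(* Let $u$ be a word, let $s$ be a nonempty factor of $u$, and let $w$ be the shortest element of $\mathrm{Nodes}(u)$ such that $s$ is a prefix of $w$. Then $s$ is a seed of $u$ if and only if $|s|\ge\Delta(w)$ and $s$ is a border seed of $u$.
   Context: For a factor $v$ of $u$, $\mathrm{Occ}(v,u)$ is the set of starting positions of occurrences of $v$ in $u$, $\mathit{first}(v)=\min\mathrm{Occ}(v,u)$, $\mathit{last}(v)=\max\mathrm{Occ}(v,u)$. For a finite set $X$ of integers, $\mathrm{maxgap}(X)$ is the maximum of $b-a$ over consecutive elements $a<b$ of $X$, or $0$ if $|X|\le1$; $\mathrm{maxgap}(v)=\mathrm{maxgap}(\mathrm{Occ}(v,u))$. $\mathrm{Nodes}(u)$ is the set of factors of $u$ corresponding to explicit nodes of the suffix tree of $u$ (the root, the branching nodes and the leaves). For $w\in\mathrm{Nodes}(u)$, $\Delta(w)=\max\{\mathrm{maxgap}(x): x \text{ a prefix of } w\}$. A word $s$ covers $y$ if every position of $y$ lies in some occurrence of $s$ in $y$. A seed of $u$ is a factor $s$ of $u$ such that $u$ is a factor of some word covered by $s$. Writing $u=w_1w_2w_3$ with $w_2=u[\mathit{first}(s)..\mathit{last}(s)+|s|-1]$, $s$ is a border seed of $u$ if $s$ is a seed of $w_1\,s\,w_3$. *)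

(* Words are sequences over an alphabet T : eqType;
   positions are 0-based (gaps are unaffected by the indexing base). *)
From mathcomp Require Import all_boot.
Set Implicit Arguments. Unset Strict Implicit. Unset Printing Implicit Defensive.

Section Words.
Variable T : eqType.

Definition factor (v u : seq T) : bool := infix v u.

Definition Occ (v u : seq T) : seq nat :=
  [seq i <- iota 0 (size u - size v).+1 | take (size v) (drop i u) == v].

Definition first (v u : seq T) : nat := head 0 (Occ v u).
Definition last_occ (v u : seq T) : nat := last 0 (Occ v u).

Definition maxgap (X : seq nat) : nat :=
  match X with
  | [::] => 0
  | x :: X' => \max_(p <- zip X X') (p.2 - p.1)
  end.

Definition maxgap_w (v u : seq T) : nat := maxgap (Occ v u).

Definition right_branching (v u : seq T) : Prop :=
  exists a b : T, a != b /\ factor (rcons v a) u /\ factor (rcons v b) u.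

Definition no_right_ext (v u : seq T) : Prop :=
  forall a : T, ~~ factor (rcons v a) u.

(* Nodes(u): explicit nodes of the suffix tree of u, i.e. the root (empty
   word), the branching nodes (right-branching factors), and the leaves
   (factors with no right extension). *)
Definition Nodes (u w : seq T) : Prop :=
  factor w u /\ (w = [::] \/ right_branching w u \/ no_right_ext w u).

Definition Delta (w u : seq T) : nat :=
  \max_(i < (size w).+1) maxgap_w (take i w) u.

Definition covers (s y : seq T) : Prop :=
  forall i, i < size y ->
    exists2 j, j \in Occ s y & j <= i < j + size s.

Definition seed (s u : seq T) : Prop :=
  factor s u /\ exists y : seq T, covers s y /\ factor u y.

(* s is a border seed of u: with u = w1 w2 w3 and
   w2 = u[first(s) .. last(s)+|s|-1], s is a seed of w1 s w3 *)
Definition border_seed (s u : seq T) : Prop :=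
  seed s (take (first s u) u ++ s ++ drop (last_occ s u + size s) u).

End Words.

From mathcomp Require Import all_boot zify.
Set Implicit Arguments. Unset Strict Implicit. Unset Printing Implicit Defensive.

(* Let w2 be the stretch of u from the first occurrence of s to the end of its
   last one, so that u = w1 w2 w3.  A covering by s of a superword of u can be
   transported to one of w1 s w3 and back: the two words agree outside w2, both
   w2 and s begin and end with s, and w2 is covered by the occurrences of s in u
   as soon as consecutive ones are at most |s| apart.  A seed forces this gap
   bound, indeed for the occurrences of every prefix of s.  Finally Delta(w) is
   the largest gap among the prefixes of s: a prefix of w strictly longer than s
   is not a node, since w is the shortest one, so it has a unique right
   extension, and extending it only loses its occurrence as a suffix of u, which
   cannot increase the maximal gap. *)

Section MaxGap.
Implicit Types (X Y : seq nat) (a b c g i : nat).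

Lemma maxgap_cons2 x y X : maxgap [:: x, y & X] = maxn (y - x) (maxgap (y :: X)).
Proof. by rewrite /maxgap /= big_cons. Qed.

Lemma leq_maxgap_cat X Y : maxgap X <= maxgap (X ++ Y).
Proof.
elim: X => [|x [|y X] IH] //; first by rewrite /maxgap big_nil.
by rewrite !cat_cons !maxgap_cons2 -cat_cons; move: IH; lia.
Qed.

Lemma maxgap_succ X a b : sorted ltn X -> a \in X -> b \in X -> a < b ->
  exists2 c, c \in X & a < c <= a + maxgap X.
Proof.
elim: X => [|x [|y X] IH] // sX; first by rewrite !inE => /eqP-> /eqP->; rewrite ltnn.
have /allP ltx := order_path_min ltn_trans sX.
rewrite in_cons => /orP[/eqP-> _ _ | aX bX ab].
  exists y; first by rewrite !inE eqxx orbT.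
  by rewrite ltx ?mem_head // maxgap_cons2; lia.
have bX' : b \in y :: X.
  by move: bX; rewrite in_cons => /orP[/eqP bx|//]; have := ltx _ aX; lia.
have [c cX ac] := IH (path_sorted sX) aX bX' ab.
exists c; first by rewrite in_cons cX orbT.
by rewrite maxgap_cons2; lia.
Qed.

Lemma maxgap_leqP X g : sorted ltn X ->
  reflect (forall a b, a \in X -> b \in X -> a < b -> exists2 c, c \in X & a < c <= a + g)
          (maxgap X <= g).
Proof.
move=> sX; apply: (iffP idP) => [gap a b aX bX ab | succ].
  by have [c cX ac] := maxgap_succ sX aX bX ab; exists c => //; lia.
elim: X sX succ => [|x [|y X] IH] // sX succ; first by rewrite /maxgap big_nil.
have /allP ltx := order_path_min ltn_trans sX.
rewrite maxgap_cons2 geq_max; apply/andP; split.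
  have yX : y \in [:: x, y & X] by rewrite !inE eqxx orbT.
  have /allP lty := order_path_min ltn_trans (path_sorted sX).
  have [c] := succ x y (mem_head _ _) yX (ltx _ (mem_head _ _)).
  by rewrite !in_cons => /or3P[/eqP->|/eqP->|/lty]; lia.
apply: IH (path_sorted sX) _ => a b aX bX ab.
have tl z : z \in y :: X -> z \in [:: x, y & X] := @mem_behead _ [:: x, y & X] z.
have [c] := succ a b (tl _ aX) (tl _ bX) ab.
rewrite in_cons => /orP[/eqP cx|cX]; last by exists c.
have := ltx _ aX; lia.
Qed.

Lemma maxgap_cover X g i a b : sorted ltn X -> maxgap X <= g ->
  a \in X -> a <= i -> b \in X -> i < b + g -> exists2 j, j \in X & j <= i < j + g.
Proof.
move=> sX gap aX ai bX ib.
have exP : exists j, (j \in X) && (j <= i) by exists a; rewrite aX.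
have ubP j : (j \in X) && (j <= i) -> j <= i by case/andP.
have [j /andP[jX ji] jmax] := ex_maxnP exP ubP.
exists j => //; rewrite ji ltnNge; apply/negP => jgi.
have [c cX /andP[jc cj]] := maxgap_succ sX jX bX ltac:(lia).
have := jmax c; rewrite cX /=; lia.
Qed.

End MaxGap.

Section Occurrences.
Variable T : eqType.
Implicit Types (u v x y a b : seq T).

Lemma mem_Occ v u i : (i \in Occ v u) = (i + size v <= size u) && prefix v (drop i u).
Proof.
rewrite /Occ mem_filter mem_iota add0n -prefixE andbC.
apply/andP/andP => -[iu vi]; split => //; last lia.
by move: iu (size_prefix vi); rewrite size_drop; lia.
Qed.

Lemma mem_Occ_catl v a b i : i + size v <= size a ->
  (i \in Occ v (a ++ b)) = (i \in Occ v a).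
Proof.
move=> via; rewrite !mem_Occ via size_cat (leq_trans via (leq_addr _ _)) !prefixE.
by rewrite !take_drop takel_cat // addnC.
Qed.

Lemma mem_Occ_catr v a b i : (size a + i \in Occ v (a ++ b)) = (i \in Occ v b).
Proof.
by rewrite !mem_Occ size_cat -addnA leq_add2l [size a + i]addnC -drop_drop drop_size_cat.
Qed.

Lemma mem_Occ_mid v a b : size a \in Occ v (a ++ v ++ b).
Proof.
by rewrite -[size a]addn0 mem_Occ_catr mem_Occ add0n drop0 size_cat leq_addr prefix_prefix.
Qed.

Lemma mem_Occ_prefix x v y i : prefix x v -> i \in Occ v y -> i \in Occ x y.
Proof.
move=> xv; rewrite !mem_Occ => /andP[iv vy]; rewrite (prefix_trans xv vy) andbT.
by move: iv (size_prefix xv); lia.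
Qed.

Lemma sorted_Occ v u : sorted ltn (Occ v u).
Proof. exact/sorted_filter/iota_ltn_sorted/ltn_trans. Qed.

Lemma factor_OccP v u : reflect (exists i, i \in Occ v u) (factor v u).
Proof.
apply: (iffP (@infixP _ v u)) => [[a [b ->]]|[i]].
  by exists (size a); apply: mem_Occ_mid.
rewrite mem_Occ => /andP[_ /prefixP[t Et]].
by exists (take i u), t; rewrite -Et cat_take_drop.
Qed.

Lemma mem_first_Occ v u : factor v u -> first v u \in Occ v u.
Proof. by case/factor_OccP=> i; rewrite /first; case: (Occ v u) => // j J _; apply: mem_head. Qed.

Lemma mem_last_Occ v u : factor v u -> last_occ v u \in Occ v u.
Proof.
by case/factor_OccP=> i; rewrite /last_occ; case: (Occ v u) => // j J _; apply: mem_last.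
Qed.

Lemma first_leq_last v u : factor v u -> first v u <= last_occ v u.
Proof.
case/factor_OccP=> i; have := sorted_Occ v u; rewrite /first /last_occ.
case: (Occ v u) => // j J /= sJ _; have := mem_last j J.
by rewrite in_cons => /orP[/eqP->//|/(allP (order_path_min ltn_trans sJ))/ltnW].
Qed.

Lemma maxgap_Occ_rcons x c u : factor (rcons x c) u ->
  (forall d, factor (rcons x d) u -> d = c) ->
  maxgap (Occ (rcons x c) u) <= maxgap (Occ x u).
Proof.
move=> xcu uniq_c; have := size_infix xcu; rewrite size_rcons => xu.
set N := size u - size x.
have ext i : i < N ->
    (take (size x).+1 (drop i u) == rcons x c) = (take (size x) (drop i u) == x).
  move=> iN; have xi : size x < size (drop i u) by rewrite size_drop; lia.
  rewrite (take_nth c xi) eqseq_rcons; case: eqP => //= tx; apply/eqP/uniq_c/factor_OccP.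
  exists i; rewrite mem_Occ prefixE !size_rcons (take_nth c xi) tx eqxx andbT; lia.
(* Every occurrence of x extends to one of rcons x c, except possibly a suffix of u. *)
suff [Z ->] : exists Z, Occ x u = Occ (rcons x c) u ++ Z by apply: leq_maxgap_cat.
rewrite /Occ size_rcons -/N -addn1 iotaD filter_cat.
have -> : (size u - (size x).+1).+1 = N by rewrite /N; lia.
eexists; congr (_ ++ _); apply: eq_in_filter => i; rewrite mem_iota add0n => /ext.
by rewrite -prefixE.
Qed.

End Occurrences.

Section Covering.
Variable T : eqType.
Implicit Types (s y a b pre suf : seq T).

Definition covered s y i := exists2 j, j \in Occ s y & j <= i < j + size s.

Lemma covered_infix s y a b i : covered s y i -> covered s (a ++ y ++ b) (size a + i).
Proof.
case=> j jy ji; exists (size a + j); last lia.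
by rewrite mem_Occ_catr mem_Occ_catl //; move: jy; rewrite mem_Occ => /andP[].
Qed.

Lemma covered_catl s a b b' i : i < size a ->
  covered s (a ++ s ++ b) i -> covered s (a ++ s ++ b') i.
Proof.
move=> ia [j jO ji]; exists j => //.
have jas : j + size s <= size (a ++ s) by rewrite size_cat; lia.
by move: jO; rewrite !catA !(mem_Occ_catl _ jas).
Qed.

Lemma covered_catr s a a' b k :
  covered s (a ++ s ++ b) (size a + size s + k) ->
  covered s (a' ++ s ++ b) (size a' + size s + k).
Proof.
case=> j jO ji; have aj : size a <= j by lia.
move: jO ji; rewrite -(subnKC aj) mem_Occ_catr => jO ji.
by exists (size a' + (j - size a)); rewrite ?mem_Occ_catr //; lia.
Qed.

Lemma covers_replace s pre suf X1 X2 :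
  prefix s X1 -> suffix s X1 -> prefix s X2 -> suffix s X2 ->
  covers s (pre ++ X1 ++ suf) ->
  (forall i, size pre <= i < size pre + size X2 -> covered s (pre ++ X2 ++ suf) i) ->
  covers s (pre ++ X2 ++ suf).
Proof.
move=> /prefixP[R1 E1] /suffixP[L1 F1] /prefixP[R2 E2] /suffixP[L2 F2] cov mid i.
have sX1 : size X1 = size L1 + size s by rewrite F1 size_cat.
have sX2 : size X2 = size L2 + size s by rewrite F2 size_cat.
rewrite !size_cat => iy; have [ipre|prei] := ltnP i (size pre).
  have : covered s (pre ++ X1 ++ suf) i by apply: cov; rewrite !size_cat; lia.
  by rewrite E1 E2 -!catA; apply: covered_catl.
have [iX2|X2i] := ltnP i (size pre + size X2); first by apply: mid; rewrite prei.
set k := i - (size pre + size X2).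
have -> : i = size (pre ++ L2) + size s + k by rewrite /k size_cat; lia.
rewrite F2 -catA catA; apply: (@covered_catr s (pre ++ L1)).
by rewrite -catA [L1 ++ _]catA -F1; apply: cov; rewrite !size_cat; lia.
Qed.

End Covering.

Section BorderSeed.
Variables (T : eqType) (s u : seq T).
Hypothesis s_u : factor s u.

Definition occ_span := drop (first s u) (take (last_occ s u + size s) u).

Let first_last : first s u <= last_occ s u := first_leq_last s_u.

Let last_bound : last_occ s u + size s <= size u.
Proof. by move: (mem_last_Occ s_u); rewrite mem_Occ => /andP[]. Qed.

Lemma size_take_first : size (take (first s u) u) = first s u.
Proof. by rewrite size_takel //; lia. Qed.

Lemma size_occ_span : size occ_span = last_occ s u + size s - first s u.
Proof. by rewrite size_drop size_takel. Qed.

Lemma cat_occ_span : take (first s u) u ++ occ_span ++ drop (last_occ s u + size s) u = u.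
Proof.
rewrite catA -(@take_takel _ _ (last_occ s u + size s)) ?cat_take_drop //; lia.
Qed.

Lemma prefix_occ_span : prefix s occ_span.
Proof.
have := mem_first_Occ s_u; rewrite mem_Occ => /andP[_].
by rewrite /occ_span !prefixE !take_drop take_takel //; lia.
Qed.

Lemma suffix_occ_span : suffix s occ_span.
Proof.
have := mem_last_Occ s_u; rewrite mem_Occ => /andP[_].
rewrite /occ_span suffixE size_occ_span prefixE drop_drop.
have -> : last_occ s u + size s - first s u - size s + first s u = last_occ s u by lia.
by rewrite addnC -take_drop.
Qed.

Lemma covered_occ_span i : maxgap_w s u <= size s ->
  first s u <= i < last_occ s u + size s -> covered s u i.
Proof.
move=> gap /andP[fi il].
exact: maxgap_cover (sorted_Occ s u) gap (mem_first_Occ s_u) fi (mem_last_Occ s_u) il.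
Qed.

Lemma seed_border_seed : seed s u -> border_seed s u.
Proof.
case=> _ [y [cov /infixP[a [b ey]]]]; subst y; split; first exact: infix_infix.
exists (a ++ (take (first s u) u ++ s ++ drop (last_occ s u + size s) u) ++ b).
split; last exact: infix_infix.
rewrite -!catA catA.
apply: covers_replace prefix_occ_span suffix_occ_span (prefix_refl s) (suffix_refl s) _ _.
  by move: cov; rewrite -{1}cat_occ_span -!catA catA.
move=> i /andP[lo hi]; exists (size (a ++ take (first s u) u)); first exact: mem_Occ_mid.
lia.
Qed.

Lemma border_seed_seed : maxgap_w s u <= size s -> border_seed s u -> seed s u.
Proof.
move=> gap [_ [y [cov /infixP[a [b ey]]]]]; subst y; split=> //.
exists (a ++ u ++ b); split; last exact: infix_infix.
rewrite -{1}cat_occ_span -!catA catA.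
apply: covers_replace (prefix_refl s) (suffix_refl s) prefix_occ_span suffix_occ_span _ _.
  by move: cov; rewrite -!catA catA.
move=> i; rewrite size_cat size_take_first size_occ_span => ai.
have /(covered_infix a b) : covered s u (i - size a) by apply: covered_occ_span; lia.
rewrite subnKC; last lia.
by rewrite -{1}cat_occ_span -!catA catA.
Qed.

End BorderSeed.

Lemma seed_maxgap_prefix (T : eqType) (s u x : seq T) :
  seed s u -> prefix x s -> maxgap_w x u <= size s.
Proof.
case=> _ [y [cov /infixP[a [b ey]]]] xs; subst y.
apply/maxgap_leqP; first exact: sorted_Occ.
move=> i j iO jO ij; have := jO; rewrite mem_Occ => /andP[jx _].
have [jis|isj] := leqP j (i + size s); first by exists j; rewrite ?ij.
have [|q qO qi] := cov (size a + i + size s); first by rewrite !size_cat; lia.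
have aq : size a <= q by lia.
move: qO qi; rewrite -(subnKC aq) => /(mem_Occ_prefix xs) qO qi.
rewrite mem_Occ_catr mem_Occ_catl in qO; last lia.
by exists (q - size a) => //; lia.
Qed.

Lemma maxgap_leq_Delta (T : eqType) (x w u : seq T) :
  prefix x w -> maxgap_w x u <= Delta w u.
Proof.
move=> xw; have xw' : size x < (size w).+1 by rewrite ltnS size_prefix.
have := @leq_bigmax _ (fun i : 'I_(size w).+1 => maxgap_w (take i w) u) (Ordinal xw').
by move: xw; rewrite prefixE => /eqP /= ->.
Qed.

Section ShortestNode.
Variables (T : eqType) (u s w : seq T).
Hypotheses (w_node : Nodes u w) (s_w : prefix s w)
  (w_min : forall w', Nodes u w' -> prefix s w' -> size w <= size w').

Lemma maxgap_take_succ k : size s <= k < size w ->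
  maxgap_w (take k.+1 w) u <= maxgap_w (take k w) u.
Proof.
move=> /andP[sk kw].
have [c Ec] : exists c, take k.+1 w = rcons (take k w) c.
  have : 0 < size (drop k w) by rewrite size_drop subn_gt0.
  case Ekw: (drop k w) => [|c t] //= _; exists c.
  by rewrite -cats1 -addn1 takeD Ekw /= take0.
have s_x : prefix s (take k w) by rewrite prefixE take_takel // -prefixE.
have factor_take j : factor (take j w) u.
  exact: infix_trans (prefixW (prefix_take w j)) w_node.1.
have xc_u : factor (rcons (take k w) c) u by rewrite -Ec.
rewrite /maxgap_w Ec; apply: maxgap_Occ_rcons => // d xd_u.
apply/eqP; apply: contraT => dc.
have : Nodes u (take k w).
  by split; [apply: factor_take | right; left; exists d, c; do !split].
by move/w_min/(_ s_x); rewrite (size_takel (ltnW kw)) leqNgt kw.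
Qed.

Lemma Delta_leq_seed : seed s u -> Delta w u <= size s.
Proof.
move=> seed_s.
suff take_gap k : k <= size w -> maxgap_w (take k w) u <= size s.
  by apply/bigmax_leqP => k _; apply: take_gap; rewrite -ltnS.
elim: k => [|k IH] kw; first by rewrite take0; apply: seed_maxgap_prefix (prefix0s s).
have [ks|sk] := leqP k.+1 (size s).
  apply: seed_maxgap_prefix seed_s _.
  by move: s_w; rewrite prefixE -(take_takel w ks) => /eqP ->; apply: prefix_take.
by apply: leq_trans (maxgap_take_succ _) (IH (ltnW kw)); rewrite -ltnS sk kw.
Qed.

End ShortestNode.

Theorem lemma4 (T : eqType) (u s w : seq T) :
  s != [::] -> factor s u ->
  Nodes u w -> prefix s w ->
  (forall w' : seq T, Nodes u w' -> prefix s w' -> size w <= size w') ->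
  (seed s u <-> (Delta w u <= size s /\ border_seed s u)).
Proof.
move=> _ s_u w_node s_w w_min.
split=> [seed_s | [Delta_s border_s]].
  by split; [apply: Delta_leq_seed | apply: seed_border_seed].
apply: border_seed_seed => //.
exact: leq_trans (maxgap_leq_Delta u s_w) Delta_s.
Qed.
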